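(* (1) Every affine functional $a:\mathrm{Latt}^1_{o_D}(V)\to\mathbb R$ which is invariant under the action of $k^\times$ (i.e. $a(c\Lambda)=a(\Lambda)$ for all $c\in k^\times$, where $(c\Lambda)(r)=c\Lambda(r)$) is constant. (2) Every $k^\times$-invariant affine functional on the enlarged Bruhat–Tits building of the split isotropic orthogonal group $O^{is}_{2,k}$ (identified with $\mathrm{Latt}^1_{o_k}(k)\cong\mathbb R$, on which $k^\times$ acts by scalar multiplication) is constant.
   Context: $k$ is a non-Archimedean local field with discrete valuation $\nu$ (residue characteristic different from $2$), $D$ a finite-dimensional central division $k$-algebra, $\nu$ extended to $D$, $V$ a finite-dimensional right $D$-space. An $o_D$-lattice function is a map $\Lambda$ from $\mathbb R$ to full $o_D$-lattices of $V$ with $\Lambda(r+\nu(\pi_D))=\Lambda(r)\pi_D$, decreasing, left continuous; $\mathrm{Latt}^1_{o_D}(V)$ is their set (a model of the enlarged building of $GL_D(V)$). Affine structure: for $\Lambda,\Lambda'$ with common splitting basis $(v_i)$, $\Lambda(x)=\bigoplus v_i\{\delta:\nu(\delta)\ge x-\alpha_i\}$, $\Lambda'(x)=\bigoplus v_i\{\delta:\nu(\delta)\ge x-\alpha'_i\}$, $t\Lambda+(1-t)\Lambda'$ corresponds to $t\alpha_i+(1-t)\alpha'_i$ ($t\in[0,1]$). An affine functional $a$ satisfies $a(tx+(1-t)y)=ta(x)+(1-t)a(y)$. *)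

From HB Require Import structures.
From mathcomp Require Import all_boot all_order all_algebra.
From mathcomp Require Import falgebra.
From mathcomp Require Import Rstruct.
Set Implicit Arguments.
Unset Strict Implicit.
Unset Printing Implicit Defensive.
Import Order.TTheory GRing.Theory Num.Theory.
Local Open Scope ring_scope.

Notation RR := Rdefinitions.R.

Section Defs.

(* "d has valuation >= r", with the convention nu(0) = +oo *)
Definition vge (A : nzRingType) (nu : A -> RR) (r : RR) (d : A) : Prop :=
  d = 0 \/ r <= nu d.

(* nu (defined on nonzero elements) is a valuation *)
Definition valuation (A : nzRingType) (nu : A -> RR) : Prop :=
  (forall x y : A, x != 0 -> y != 0 -> nu (x * y) = nu x + nu y) /\
  (forall x y : A, x != 0 -> y != 0 -> x + y != 0 ->
      Num.min (nu x) (nu y) <= nu (x + y)).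

Definition discrete_valuation (k : fieldType) (nu : k -> RR) : Prop :=
  valuation nu /\
  exists e : RR, 0 < e /\
    (forall x : k, x != 0 -> exists z : int, nu x = z%:~R * e) /\
    (exists x : k, x != 0 /\ nu x = e).

Definition nu_complete (k : fieldType) (nu : k -> RR) : Prop :=
  forall u : nat -> k,
    (forall M : RR, exists N : nat, forall m n : nat,
        (N <= m)%N -> (N <= n)%N -> vge nu M (u m - u n)) ->
    exists l : k, forall M : RR, exists N : nat, forall n : nat,
        (N <= n)%N -> vge nu M (u n - l).

Definition finite_residue_field (k : fieldType) (nu : k -> RR) : Prop :=
  exists s : seq k, (forall y, y \in s -> vge nu 0 y) /\
    forall x : k, vge nu 0 x -> exists2 y, y \in s & (x - y = 0 \/ 0 < nu (x - y)).

Definition nonarch_local_field (k : fieldType) (nu : k -> RR) : Prop :=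
  [/\ discrete_valuation nu, nu_complete nu & finite_residue_field nu].

Definition residue_char_not2 (k : fieldType) (nu : k -> RR) : Prop :=
  (2%:R : k) != 0 /\ nu 2%:R = 0.

Definition uniformizer (A : nzRingType) (nu : A -> RR) (p : A) : Prop :=
  [/\ p != 0, 0 < nu p & forall x : A, x != 0 -> 0 < nu x -> nu p <= nu x].

Definition right_module (A : nzRingType) (V : zmodType) (act : V -> A -> V) : Prop :=
  [/\ (forall v w d, act (v + w) d = act v d + act w d),
      (forall v d e, act v (d + e) = act v d + act v e),
      (forall v d e, act v (d * e) = act (act v d) e) &
      (forall v, act v 1 = v)].

Definition lcomb (A : nzRingType) (V : zmodType) (act : V -> A -> V)
  (n : nat) (g : 'I_n -> V) (d : 'I_n -> A) : V :=
  \sum_(i < n) act (g i) (d i).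

Definition is_basis (A : nzRingType) (V : zmodType) (act : V -> A -> V)
  (n : nat) (b : 'I_n -> V) : Prop :=
  (forall v, exists d, v = lcomb act b d) /\
  (forall d, lcomb act b d = 0 -> forall i, d i = 0).

Definition finite_dim (A : nzRingType) (V : zmodType) (act : V -> A -> V) : Prop :=
  exists n (b : 'I_n -> V), is_basis act b.

(* full o_A-lattice in V (o_A = {d | nu d >= 0}): a finitely generated
   o_A-submodule of V whose A-span is V *)
Definition full_lattice (A : nzRingType) (nu : A -> RR) (V : zmodType)
  (act : V -> A -> V) (L : V -> Prop) : Prop :=
  exists m (g : 'I_m -> V),
    (forall v, L v <-> exists a : 'I_m -> A,
          (forall i, vge nu 0 (a i)) /\ v = lcomb act g a) /\
    (forall v, exists d, v = lcomb act g d).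

Definition lattice_fun (A : nzRingType) (nu : A -> RR) (pi : A) (V : zmodType)
  (act : V -> A -> V) (Lam : RR -> V -> Prop) : Prop :=
  [/\ (forall r, full_lattice nu act (Lam r)),
      (forall r v, Lam (r + nu pi) v <-> exists w, Lam r w /\ v = act w pi),
      (forall r s, r <= s -> forall v, Lam s v -> Lam r v) &
      (forall r v, (forall s, s < r -> Lam s v) -> Lam r v)].

Definition scal_fun (A : nzRingType) (V : zmodType) (act : V -> A -> V)
  (c : A) (Lam : RR -> V -> Prop) : RR -> V -> Prop :=
  fun r v => exists w, Lam r w /\ v = act w c.

Definition split_fun (A : nzRingType) (nu : A -> RR) (V : zmodType)
  (act : V -> A -> V) (n : nat) (b : 'I_n -> V) (alpha : 'I_n -> RR)
  : RR -> V -> Prop :=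
  fun x v => exists d : 'I_n -> A,
      (forall i, vge nu (x - alpha i) (d i)) /\ v = lcomb act b d.

Definition splits (A : nzRingType) (nu : A -> RR) (V : zmodType)
  (act : V -> A -> V) (Lam : RR -> V -> Prop) (n : nat) (b : 'I_n -> V)
  (alpha : 'I_n -> RR) : Prop :=
  forall x v, Lam x v <-> split_fun nu act b alpha x v.

(* affine functional on Latt^1: for any two lattice functions with a common
   splitting basis, a(t Lam + (1-t) Lam') = t a(Lam) + (1-t) a(Lam') *)
Definition affine_functional (A : nzRingType) (nu : A -> RR) (pi : A)
  (V : zmodType) (act : V -> A -> V) (a : (RR -> V -> Prop) -> RR) : Prop :=
  forall (Lam Lam' : RR -> V -> Prop) (n : nat) (b : 'I_n -> V)
         (alpha alpha' : 'I_n -> RR) (t : RR),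
    lattice_fun nu pi act Lam -> lattice_fun nu pi act Lam' ->
    is_basis act b -> splits nu act Lam b alpha -> splits nu act Lam' b alpha' ->
    0 <= t <= 1 ->
    a (split_fun nu act b (fun i => t * alpha i + (1 - t) * alpha' i))
      = t * a Lam + (1 - t) * a Lam'.

End Defs.

From HB Require Import structures.
From mathcomp Require Import all_boot all_order all_algebra.
From mathcomp Require Import falgebra perm.
From mathcomp Require Import Rstruct lra ring.
From Stdlib Require Raxioms.
From Stdlib Require Import Classical ClassicalEpsilon FunctionalExtensionality PropExtensionality.
Import Order.TTheory GRing.Theory Num.Theory.
Set Implicit Arguments.
Unset Strict Implicit.
Unset Printing Implicit Defensive.
Local Open Scope ring_scope.

(* An affine functional [a] restricted to an apartment -- the lattice functions
   [split_fun b alpha] split by a fixed basis [b] -- is an affine function of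
   the exponent vector [alpha] in [R^n].  A scalar [c] with [nu c <> 0] shifts
   all exponents by [- nu c], so invariance makes this function periodic, hence
   constant, along the diagonal.  The transvection [b_j |-> b_j + b_i] does not
   change the split lattice function on the half-space [alpha_j <= alpha_i];
   as two affine functions agreeing on a half-space agree everywhere, comparing
   the transvections [b_j += b_i] and [b_i += b_j] gives invariance under the
   transposition of the coordinates [i] and [j].  An affine function on [R^n]
   invariant under diagonal translations and coordinate permutations is
   constant.

   It remains to see that every lattice function [Lam] shares an apartment
   with the standard one [Lam0], split by a basis [b0] with zero exponents.
   The common basis is built one vector at a time: the new vector maximizes
   [norm_gap = lnorm Lam - lnorm Lam0] on the span of the remaining vectors of
   [b0] and replaces one of its coordinates of minimal valuation.  The maximum
   exists because [norm_gap] is bounded and vectors whose gaps are pairwise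
   incongruent modulo [nu p] are linearly independent, so at most [n] distinct
   gaps lie within [nu p] of the supremum. *)

Section Valuation.
Variables (D : unitRingType) (nu : D -> RR).
Hypotheses (nu_val : valuation nu)
  (D_div : forall x : D, x != 0 -> x \is a GRing.unit).

Lemma divr_mul_neq0 (x y : D) : x != 0 -> y != 0 -> x * y != 0.
Proof.
move=> x0 y0; apply: contraNneq y0 => xy0.
by rewrite -(mulKr (D_div x0) y) xy0 mulr0.
Qed.

Lemma valM (x y : D) : x != 0 -> y != 0 -> nu (x * y) = nu x + nu y.
Proof. exact: nu_val.1. Qed.

Lemma val1 : nu 1 = 0.
Proof. by have := valM (oner_neq0 D) (oner_neq0 D); rewrite mulr1; lra. Qed.

Lemma valN (x : D) : nu (- x) = nu x.
Proof.
have [->|x0] := eqVneq x 0; first by rewrite oppr0.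
have N1 : (-1 : D) != 0 by rewrite oppr_eq0 oner_neq0.
have := valM N1 N1; rewrite mulrNN mulr1 val1 => nuN1.
by rewrite -mulN1r valM // (_ : nu (-1) = 0) ?add0r //; lra.
Qed.

Lemma valV (x : D) : x != 0 -> nu x^-1 = - nu x.
Proof.
move=> x0; have := valM (invr_neq0 x0) x0.
by rewrite mulVr ?D_div // val1; lra.
Qed.

Lemma vge_neq0 r (x : D) : x != 0 -> vge nu r x <-> r <= nu x.
Proof. by move=> x0; split=> [[x_eq0|//]|]; [move: x0; rewrite x_eq0 eqxx|right]. Qed.

Lemma vge_le r s (x : D) : s <= r -> vge nu r x -> vge nu s x.
Proof. by move=> sr [->|rx]; [left|right; apply: le_trans rx]. Qed.

Lemma vgeN r (x : D) : vge nu r (- x) <-> vge nu r x.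
Proof.
suff vN y : vge nu r y -> vge nu r (- y) by split=> /vN; rewrite ?opprK.
by case=> [->|ry]; [left; rewrite oppr0|right; rewrite valN].
Qed.

Lemma vgeD r (x y : D) : vge nu r x -> vge nu r y -> vge nu r (x + y).
Proof.
case=> [->|rx]; first by rewrite add0r.
case=> [->|ry]; first by rewrite addr0; right.
have [->|xy0] := eqVneq (x + y) 0; first by left.
have [->|x0] := eqVneq x 0; first by rewrite add0r; right.
have [->|y0] := eqVneq y 0; first by rewrite addr0; right.
by right; apply: le_trans (nu_val.2 x y x0 y0 xy0); rewrite le_min rx ry.
Qed.

Lemma vgeB r (x y : D) : vge nu r x -> vge nu r y -> vge nu r (x - y).
Proof. by move=> rx ry; apply: vgeD => //; apply/vgeN. Qed.

Lemma vgeM r s (x y : D) : vge nu r x -> vge nu s y -> vge nu (r + s) (x * y).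
Proof.
have [->|x0] := eqVneq x 0; first by rewrite mul0r; left.
have [->|y0] := eqVneq y 0; first by rewrite mulr0; left.
move=> /(vge_neq0 _ x0) rx /(vge_neq0 _ y0) sy.
by right; rewrite valM //; apply: lerD.
Qed.

Lemma vge_eq0 (x : D) : (forall r, vge nu r x) -> x = 0.
Proof.
move=> vx; apply/eqP; apply: contraT => x0.
by have /(vge_neq0 _ x0) := vx (nu x + 1); lra.
Qed.

Lemma vge_lcont r (x : D) : (forall s, s < r -> vge nu s x) -> vge nu r x.
Proof.
have [->|x0] := eqVneq x 0; first by left.
move=> vx; apply/(vge_neq0 _ x0); rewrite leNgt; apply/negP => xr.
by have /(vge_neq0 _ x0) := vx ((r + nu x) / 2) ltac:(lra); lra.
Qed.

Variables (p : D) (p_unif : uniformizer nu p).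

Lemma unif_neq0 : p != 0. Proof. by case: p_unif. Qed.
Lemma val_unif_gt0 : 0 < nu p. Proof. by case: p_unif. Qed.
Lemma unif_unit : p \is a GRing.unit. Proof. exact: D_div unif_neq0. Qed.

Definition upow (z : int) : D := p ^ z.

Lemma unifX_neq0 (n : nat) : p ^+ n != 0.
Proof. by elim: n => [|n ih]; rewrite ?oner_neq0 // exprS divr_mul_neq0 ?unif_neq0. Qed.

Lemma upow_neq0 z : upow z != 0.
Proof. by case: z => n; rewrite /upow ?NegzE -?exprnN -?exprnP ?invr_eq0 unifX_neq0. Qed.

Lemma val_unifX (n : nat) : nu (p ^+ n) = n%:R * nu p.
Proof.
elim: n => [|n ih]; first by rewrite expr0 val1 mul0r.
by rewrite exprS valM ?unif_neq0 ?unifX_neq0 // ih -nat1r mulrDl mul1r.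
Qed.

Lemma val_upow z : nu (upow z) = z%:~R * nu p.
Proof.
case: z => n; rewrite /upow ?NegzE -?exprnN -?exprnP ?val_unifX //.
by rewrite valV ?unifX_neq0 // val_unifX intrN mulNr.
Qed.

Lemma upowD z w : upow (z + w) = upow z * upow w.
Proof. by rewrite /upow exprzDr // unif_unit. Qed.

Lemma upowK z d : upow z * (upow (- z) * d) = d.
Proof. by rewrite mulrA -upowD subrr /upow expr0z mul1r. Qed.

Lemma val_floor r : exists z : int, z%:~R * nu p <= r < z%:~R * nu p + nu p.
Proof.
have e0 := val_unif_gt0; exists (Num.floor (r / nu p)).
have rE : r = r / nu p * nu p by rewrite divfK // gt_eqF.
have := Num.Theory.floorD1_gt (r / nu p); rewrite intrD => f_gt.
apply/andP; split; first by rewrite [X in _ <= X]rE ler_pM2r // Num.Theory.floor_le.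
by rewrite [X in X < _]rE -[X in _ + X]mul1r -mulrDl ltr_pM2r.
Qed.

(* discreteness of the value group follows from the minimality of [nu p] *)
Lemma val_discrete (x : D) : x != 0 -> exists z : int, nu x = z%:~R * nu p.
Proof.
move=> x0; have [z /andP[zx xz]] := val_floor (nu x); exists z.
have y0 : x * upow (- z) != 0 by rewrite divr_mul_neq0 ?upow_neq0.
have nuy : nu (x * upow (- z)) = nu x - z%:~R * nu p.
  by rewrite valM ?upow_neq0 // val_upow intrN mulNr.
case: (ltP 0 (nu (x * upow (- z)))) => [y_pos|]; last by rewrite nuy; lra.
by case: p_unif => _ _ /(_ _ y0 y_pos); rewrite nuy; lra.
Qed.

Definition vceil r := Num.ceil (r / nu p).

Lemma vceil_spec r : r <= (vceil r)%:~R * nu p /\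
  forall x, x != 0 -> r <= nu x -> (vceil r)%:~R * nu p <= nu x.
Proof.
have e0 := val_unif_gt0; split; first by rewrite -ler_pdivrMr // Num.Theory.ceil_ge.
move=> x x0 rx; have [z zE] := val_discrete x0.
by rewrite zE ler_pM2r // ler_int Num.Theory.ceil_le_int ler_pdivrMr // -zE.
Qed.

Lemma vge_upowN_vceil r d : vge nu r d -> vge nu 0 (upow (- vceil r) * d).
Proof.
have [_ vc_min] := vceil_spec r.
have [->|d0] := eqVneq d 0; first by rewrite mulr0; left.
move=> /(vge_neq0 _ d0) rd; right.
by rewrite valM ?upow_neq0 // val_upow intrN mulNr; have := vc_min d d0 rd; lra.
Qed.

Lemma vge_upow_vceil r a : vge nu 0 a -> vge nu r (upow (vceil r) * a).
Proof.
have [r_vc _] := vceil_spec r => a0; apply: vge_le r_vc _.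
by rewrite -[X in vge _ X _]addr0; apply: vgeM => //; right; rewrite val_upow.
Qed.

End Valuation.

Section RightModule.
Variables (D : nzRingType) (V : zmodType) (act : V -> D -> V).
Hypothesis act_mod : right_module act.

Lemma actDl v w d : act (v + w) d = act v d + act w d. Proof. by case: act_mod. Qed.
Lemma actDr v d e : act v (d + e) = act v d + act v e. Proof. by case: act_mod. Qed.
Lemma actM v d e : act v (d * e) = act (act v d) e. Proof. by case: act_mod. Qed.
Lemma act1 v : act v 1 = v. Proof. by case: act_mod. Qed.

Lemma act0r v : act v 0 = 0.
Proof. by apply: (addrI (act v 0)); rewrite -actDr !addr0. Qed.

Lemma act0l d : act 0 d = 0.
Proof. by apply: (addrI (act 0 d)); rewrite -actDl !addr0. Qed.

Lemma actNr v d : act v (- d) = - act v d.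
Proof. by apply/eqP; rewrite -addr_eq0 -actDr addNr act0r. Qed.

Lemma act_suml (I : Type) (r : seq I) (P : pred I) (F : I -> V) d :
  act (\sum_(i <- r | P i) F i) d = \sum_(i <- r | P i) act (F i) d.
Proof. by elim/big_rec2: _ => [|i y1 y2 _ <-]; rewrite ?act0l ?actDl. Qed.

Lemma act_sumr v (I : Type) (r : seq I) (P : pred I) (F : I -> D) :
  act v (\sum_(i <- r | P i) F i) = \sum_(i <- r | P i) act v (F i).
Proof. by elim/big_rec2: _ => [|i y1 y2 _ <-]; rewrite ?act0r ?actDr. Qed.

Variables (n : nat) (b : 'I_n -> V).

Lemma eq_lcomb (d e : 'I_n -> D) : d =1 e -> lcomb act b d = lcomb act b e.
Proof. by move=> de; apply: eq_bigr => i _; rewrite de. Qed.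

Lemma lcomb0 : lcomb act b (fun _ => 0) = 0.
Proof. by rewrite /lcomb big1 // => i _; rewrite act0r. Qed.

Lemma lcombD (d e : 'I_n -> D) :
  lcomb act b (fun i => d i + e i) = lcomb act b d + lcomb act b e.
Proof. by rewrite /lcomb -big_split; apply: eq_bigr => i _; rewrite actDr. Qed.

Lemma lcombN (d : 'I_n -> D) : lcomb act b (fun i => - d i) = - lcomb act b d.
Proof. by rewrite /lcomb -sumrN; apply: eq_bigr => i _; rewrite actNr. Qed.

Lemma act_lcomb (d : 'I_n -> D) c :
  act (lcomb act b d) c = lcomb act b (fun i => d i * c).
Proof. by rewrite /lcomb act_suml; apply: eq_bigr => i _; rewrite actM. Qed.

Lemma lcomb_inj : is_basis act b ->
  forall d e, lcomb act b d = lcomb act b e -> d =1 e.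
Proof.
move=> b_basis d e de i; apply/eqP; rewrite -subr_eq0; apply/eqP.
by apply: b_basis.2 (fun i => d i - e i) _ i; rewrite lcombD lcombN de subrr.
Qed.

End RightModule.

Section DivisionModule.
Variables (D : unitRingType) (V : zmodType) (act : V -> D -> V).
Hypotheses (act_mod : right_module act)
  (D_div : forall x : D, x != 0 -> x \is a GRing.unit).

Lemma actK d : d \is a GRing.unit -> cancel (act^~ d) (act^~ d^-1).
Proof. by move=> du v; rewrite -(actM act_mod) mulrV // (act1 act_mod). Qed.

Lemma act_neq0 v d : v != 0 -> d != 0 -> act v d != 0.
Proof.
move=> v0 d0; apply: contraNneq v0 => vd0.
by rewrite -(actK (D_div d0) v) vd0 (act0l act_mod).
Qed.

End DivisionModule.

Section SplitLatticeFunction.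
Variables (D : unitRingType) (nu : D -> RR) (V : zmodType) (act : V -> D -> V).
Hypotheses (nu_val : valuation nu) (act_mod : right_module act)
  (D_div : forall x : D, x != 0 -> x \is a GRing.unit).
Variables (n : nat) (b : 'I_n -> V).
Hypothesis b_basis : is_basis act b.

Lemma scal_split_fun (c : D) (alpha : 'I_n -> RR) : c != 0 ->
  forall r v, scal_fun act c (split_fun nu act b alpha) r v <->
              split_fun nu act b (fun i => alpha i - nu c) r v.
Proof.
move=> c0 r v; split.
  case=> _ [[d [rd ->]] ->]; rewrite act_lcomb //.
  exists (fun i => d i * c); split => // i.
  apply: (@vge_le _ _ (r - alpha i + nu c)); first lra.
  by apply: vgeM => //; right.
case=> d [rd ->]; exists (lcomb act b (fun i => d i * c^-1)); split.
  exists (fun i => d i * c^-1); split => // i.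
  apply: (@vge_le _ _ (r - (alpha i - nu c) + (- nu c))); first lra.
  by apply: vgeM => //; right; rewrite valV.
by rewrite act_lcomb //; apply: eq_lcomb => i; rewrite divrK ?D_div.
Qed.

Lemma split_fun_shift (alpha : 'I_n -> RR) s r v :
  split_fun nu act b (fun i => alpha i - s) r v <-> split_fun nu act b alpha (r + s) v.
Proof.
have E i : r - (alpha i - s) = r + s - alpha i by ring.
by split=> -[d [rd ->]]; exists d; split=> // i; move: (rd i); rewrite E.
Qed.

Variables (p : D) (p_unif : uniformizer nu p).

Lemma split_fun_full (alpha : 'I_n -> RR) r :
  full_lattice nu act (split_fun nu act b alpha r).
Proof.
pose g i := act (b i) (upow p (vceil nu p (r - alpha i))).
have gE d : lcomb act g d =
    lcomb act b (fun i => upow p (vceil nu p (r - alpha i)) * d i).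
  by apply: eq_bigr => i _; rewrite (actM act_mod).
have bE d : lcomb act b d =
    lcomb act g (fun i => upow p (- vceil nu p (r - alpha i)) * d i).
  by rewrite gE; apply: eq_lcomb => i; rewrite (upowK D_div p_unif).
exists n, g; split=> [v|v]; last by have [d ->] := b_basis.1 v; rewrite bE; eexists.
split=> [[d [rd ->]]|[d [d0 ->]]]; last first.
  by rewrite gE; eexists; split; last reflexivity; move=> i; apply: vge_upow_vceil.
rewrite bE; eexists; split; last reflexivity.
by move=> i; apply: vge_upowN_vceil.
Qed.

Lemma split_lattice_fun (alpha : 'I_n -> RR) :
  lattice_fun nu p act (split_fun nu act b alpha).
Proof.
have p0 := unif_neq0 p_unif.
split => [r|r v|r s rs v [d [sd ->]]|r v rv]; first exact: split_fun_full.
- apply: iff_trans (iff_sym (split_fun_shift _ _ _ _)) _.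
  exact: iff_sym (scal_split_fun _ p0 r v).
- by exists d; split => // i; apply: vge_le (sd i); lra.
- have [d0 vE] := b_basis.1 v; exists d0; split => // i.
  apply: vge_lcont => // s si.
  have [d [rd dv]] := rv (s + alpha i) ltac:(lra).
  rewrite (lcomb_inj act_mod b_basis (etrans (esym vE) dv)).
  by apply: vge_le (rd i); lra.
Qed.

End SplitLatticeFunction.

Definition affine1 (f : RR -> RR) := forall x y t, 0 <= t <= 1 ->
  f (t * x + (1 - t) * y) = t * f x + (1 - t) * f y.

Lemma affine1E f : affine1 f -> forall s, f s = f 0 + s * (f 1 - f 0).
Proof.
move=> f_aff s; case: (lerP 0 s) => s0; case: (lerP s 1) => s1.
- have := f_aff 1 0 s; rewrite mulr1 mulr0 addr0 => -> //; first ring.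
  by rewrite s0 s1.
- (* [1] lies between [0] and [s] *)
  have s_neq0 : s != 0 by rewrite gt_eqF // (lt_trans ltr01).
  have t01 : 0 <= s^-1 <= 1 by rewrite invr_ge0 ltW ?invf_le1 ?(lt_trans ltr01) ?ltW.
  move: (f_aff s 0 _ t01); rewrite mulr0 addr0 mulVf // => ->; field.
  by rewrite s_neq0.
- (* [0] lies between [s] and [1] *)
  have s1_neq0 : 1 - s != 0 by rewrite gt_eqF //; lra.
  have t01 : 0 <= (1 - s)^-1 <= 1.
    by rewrite invr_ge0 invf_le1; lra.
  have := f_aff s 1 _ t01; rewrite (_ : _ * s + _ = 0); last by field.
  by move=> ->; field.
- lra.
Qed.

Lemma affine1_periodic_const f q : affine1 f -> q != 0 -> f q = f 0 ->
  forall s, f s = f 0.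
Proof.
move=> f_aff q0 fq s.
have : q * (f 1 - f 0) = 0 by have := affine1E f_aff q; lra.
move/eqP; rewrite mulf_eq0 (negbTE q0) => /eqP f10.
by rewrite (affine1E f_aff s) f10 mulr0 addr0.
Qed.

Section AffineVec.
Variable n : nat.
Notation vec := ('I_n -> RR).

Definition affine_vec (g : vec -> RR) := forall (x y : vec) t, 0 <= t <= 1 ->
  g (fun i => t * x i + (1 - t) * y i) = t * g x + (1 - t) * g y.

Variables (g : vec -> RR) (g_aff : affine_vec g).

Lemma affine_vec_line (x y : vec) :
  affine1 (fun s => g (fun i => s * x i + (1 - s) * y i)).
Proof.
move=> s1 s2 t t01; rewrite -g_aff //; congr g.
by apply: functional_extensionality => i; ring.
Qed.

Lemma affine_vec_lineE (x y : vec) s :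
  g (fun i => s * x i + (1 - s) * y i) = g y + s * (g x - g y).
Proof.
rewrite (affine1E (affine_vec_line x y) s) /=.
have -> : (fun i => 0 * x i + (1 - 0) * y i) = y.
  by apply: functional_extensionality => i; ring.
have -> : (fun i => 1 * x i + (1 - 1) * y i) = x.
  by apply: functional_extensionality => i; ring.
by [].
Qed.

Definition zerov : vec := fun _ => 0.
Definition unitv (k : 'I_n) : vec := fun i => if i == k then 1 else 0.

Lemma affine_vecZ (x : vec) s :
  g (fun i => s * x i) = g zerov + s * (g x - g zerov).
Proof.
rewrite -(affine_vec_lineE x zerov s); congr g.
by apply: functional_extensionality => i; rewrite /zerov; ring.
Qed.

Lemma affine_vecD (x y : vec) : g (fun i => x i + y i) = g x + g y - g zerov.
Proof.
have := g_aff x y (t := 1 / 2) ltac:(apply/andP; split; lra).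
rewrite (_ : (fun i => _) = fun i => 1 / 2 * (x i + y i)); last first.
  by apply: functional_extensionality => i; field.
by rewrite affine_vecZ; lra.
Qed.

Lemma affine_vecE (x : vec) :
  g x = g zerov + \sum_(k < n) x k * (g (unitv k) - g zerov).
Proof.
suff supp_ind (s : seq 'I_n) : uniq s -> forall x : vec, (forall i, i \notin s -> x i = 0) ->
    g x = g zerov + \sum_(k <- s) x k * (g (unitv k) - g zerov).
  by apply: supp_ind => [|i]; [exact: index_enum_uniq|rewrite mem_index_enum].
elim: s {x} => [|k s ih] /= => [_|/andP[ks s_uniq]] x x_supp.
  rewrite big_nil addr0; congr g; apply: functional_extensionality => i.
  exact: x_supp.
pose x' : vec := fun i => if i == k then 0 else x i.
have xE : x = fun i => x' i + x k * unitv k i.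
  apply: functional_extensionality => i; rewrite /x' /unitv.
  by case: eqVneq => [->|_]; rewrite ?mulr1 ?mulr0 ?add0r ?addr0.
rewrite {1}xE affine_vecD affine_vecZ ih //; last first.
  move=> i i_s; rewrite /x'; case: eqVneq => // ik.
  by apply: x_supp; rewrite !inE negb_or ik.
rewrite big_cons big_seq_cond [in RHS]big_seq_cond.
rewrite (eq_bigr (fun j => x j * (g (unitv j) - g zerov))); first ring.
move=> j /andP[js _]; rewrite /x'; case: eqVneq => // jk.
by move: ks; rewrite -jk js.
Qed.

Lemma affine_vec_const :
  (forall (x : vec) s, g (fun i => x i + s) = g x) ->
  (forall i j (x : vec), g (fun k => x (tperm i j k)) = g x) ->
  forall x, g x = g zerov.
Proof.
move=> g_shift g_perm x.
have unitv_eq i j : g (unitv i) = g (unitv j).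
  rewrite -(g_perm i j (unitv i)); congr g; apply: functional_extensionality => k.
  by rewrite /unitv (canF_eq (tpermK i j)) tpermL.
have unitv_zero k : g (unitv k) - g zerov = 0.
  have n_pos : (0 < n)%N := leq_ltn_trans (leq0n k) (ltn_ord k).
  have := g_shift zerov 1; rewrite affine_vecE.
  rewrite (eq_bigr (fun _ => g (unitv k) - g zerov)); last first.
    by move=> i _ /=; rewrite /zerov add0r mul1r (unitv_eq i k).
  rewrite sumr_const card_ord -mulr_natl => /eqP.
  by rewrite -subr_eq0 addrAC subrr add0r mulf_eq0 pnatr_eq0 gtn_eqF // => /eqP.
by rewrite affine_vecE big1 ?addr0 // => k _; rewrite unitv_zero mulr0.
Qed.

End AffineVec.

Lemma affine_vec_eq_halfspace n (g h : ('I_n -> RR) -> RR) (i j : 'I_n) :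
  affine_vec g -> affine_vec h ->
  (forall x, x j <= x i -> g x = h x) -> forall x, g x = h x.
Proof.
move=> g_aff h_aff gh x.
(* the line [s |-> s x + (1 - s) y] lies in the half-space for [s <= 0] *)
pose y k := if k == j then x k - (`|x j - x i| + 1) else x k.
pose F s := g (fun k => s * x k + (1 - s) * y k) - h (fun k => s * x k + (1 - s) * y k).
have F_aff : affine1 F.
  by move=> s1 s2 t t01; rewrite /F !affine_vec_line //; ring.
have F_zero s : s <= 0 -> F s = 0.
  move=> s0; apply/eqP; rewrite subr_eq0; apply/eqP/gh.
  have := ler_norm (x j - x i); have : 0 <= - s * (`|x j - x i| + 1).
    by apply: mulr_ge0; [lra|apply: addr_ge0].
  by rewrite /y eqxx; case: eqVneq => [->|_]; nra.
have F1 : F 1 = 0.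
  by have := affine1E F_aff (-1); rewrite (F_zero (-1)) ?(F_zero 0) ?lerN10 //; lra.
apply/eqP; move: F1; rewrite /F (_ : (fun k => 1 * x k + (1 - 1) * y k) = x).
  by move/eqP; rewrite subr_eq0.
by apply: functional_extensionality => k; ring.
Qed.

Lemma fun2_prop_ext (T U : Type) (P Q : T -> U -> Prop) :
  (forall x y, P x y <-> Q x y) -> P = Q.
Proof.
move=> PQ; apply: functional_extensionality => x.
by apply: functional_extensionality => y; apply: propositional_extensionality.
Qed.

Section ChangeOfBasis.
Variables (D : nzRingType) (nu : D -> RR) (V : zmodType) (act : V -> D -> V).
Hypothesis act_mod : right_module act.
Variable n : nat.
Implicit Types (b : 'I_n -> V) (d e : 'I_n -> D).

Lemma is_basis_change b b' (T S : ('I_n -> D) -> 'I_n -> D) :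
  is_basis act b -> (forall d, lcomb act b' d = lcomb act b (T d)) ->
  (forall e, T (S e) =1 e) -> (forall d, T d =1 (fun=> 0) -> d =1 (fun=> 0)) ->
  is_basis act b'.
Proof.
move=> [b_span b_free] b'E TS T_inj; split=> [v|d d0].
  by have [e ->] := b_span v; exists (S e); rewrite b'E; apply: eq_lcomb => k; rewrite TS.
by apply: T_inj; apply: b_free; rewrite -b'E.
Qed.

Lemma split_fun_change b b' (alpha alpha' : 'I_n -> RR)
    (T S : ('I_n -> D) -> 'I_n -> D) :
  (forall d, lcomb act b' d = lcomb act b (T d)) -> (forall e, T (S e) =1 e) ->
  (forall r d, (forall k, vge nu (r - alpha' k) (d k)) <->
               (forall k, vge nu (r - alpha k) (T d k))) ->
  forall r v, split_fun nu act b' alpha' r v <-> split_fun nu act b alpha r v.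
Proof.
move=> b'E TS Tval r v; split=> [[d [rd ->]]|[e [re ->]]].
  by exists (T d); split; [apply/Tval|apply: b'E].
exists (S e); split; first by apply/Tval => k; rewrite TS.
by rewrite b'E; apply: eq_lcomb => k; rewrite TS.
Qed.

Definition bump d i (x : D) : 'I_n -> D := fun k => if k == i then d i + x else d k.

Definition transv b (i j : 'I_n) : 'I_n -> V :=
  fun k => if k == j then b j + b i else b k.

Lemma lcomb_bump b d i x : lcomb act b (bump d i x) = lcomb act b d + act (b i) x.
Proof.
rewrite /lcomb (bigD1 i) // [X in _ = X + _](bigD1 i) //= /bump eqxx (actDr act_mod).
rewrite -!addrA; congr (_ + _).
rewrite addrC; congr (_ + _); apply: eq_bigr => k /negbTE ki.
by rewrite ki.
Qed.

Lemma lcomb_transv b d i j :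
  lcomb act (transv b i j) d = lcomb act b d + act (b i) (d j).
Proof.
rewrite /lcomb (bigD1 j) // [X in _ = X + _](bigD1 j) //= /transv eqxx (actDl act_mod).
rewrite -!addrA; congr (_ + _).
rewrite addrC; congr (_ + _); apply: eq_bigr => k /negbTE kj.
by rewrite kj.
Qed.

Definition transv_coord (i j : 'I_n) d := bump d i (d j).

Lemma lcomb_transv_coord b d i j :
  lcomb act (transv b i j) d = lcomb act b (transv_coord i j d).
Proof. by rewrite lcomb_transv lcomb_bump. Qed.

Lemma transv_coordK i j e : i != j -> transv_coord i j (bump e i (- e j)) =1 e.
Proof.
move=> ij k; have ji : (j == i) = false by rewrite eq_sym (negbTE ij).
by rewrite /transv_coord /bump ji eqxx; case: eqVneq => [->|]; rewrite ?eqxx ?subrK.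
Qed.

Lemma is_basis_transv b i j : i != j -> is_basis act b -> is_basis act (transv b i j).
Proof.
move=> ij b_basis; apply: (is_basis_change b_basis (fun d => lcomb_transv_coord b d i j)
  (fun e => transv_coordK e ij)) => d d0 k.
have dj0 : d j = 0 by have := d0 j; rewrite /transv_coord /bump eq_sym (negbTE ij).
by have := d0 k; rewrite /transv_coord /bump dj0 addr0; case: eqVneq => [->|].
Qed.

Definition swap_coord (i j : 'I_n) d : 'I_n -> D :=
  fun k => if k == i then - d j else if k == j then d i + d j else d k.

Lemma lcomb_swap_coord b d i j : i != j ->
  lcomb act (transv b j i) d = lcomb act (transv b i j) (swap_coord i j d).
Proof.
move=> ij; have ji : (j == i) = false by rewrite eq_sym (negbTE ij).
have swapE : swap_coord i j d =1 bump (bump d i (- (d i + d j))) j (d i).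
  move=> k; rewrite /swap_coord /bump /=.
  case: eqVneq => [->|_]; first by rewrite (negbTE ij) opprD addrA subrr add0r.
  by case: (eqVneq k j) => [kj|//]; subst k; rewrite ji addrC.
have swap_j : swap_coord i j d j = d i + d j by rewrite /swap_coord ji eqxx.
rewrite !lcomb_transv (eq_lcomb act b swapE) !lcomb_bump swap_j -!addrA.
by congr (_ + _); rewrite addrCA -(actDr act_mod) addNr (act0r act_mod) addr0.
Qed.

Lemma swap_coordK i j e : i != j ->
  swap_coord i j (fun k => if k == i then e j + e i else if k == j then - e i else e k) =1 e.
Proof.
move=> ij k; have ji : (j == i) = false by rewrite eq_sym (negbTE ij).
rewrite /swap_coord !eqxx ji; case: eqVneq => [->|_]; first by rewrite opprK.
by case: eqVneq => [->|//]; rewrite addrK.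
Qed.

End ChangeOfBasis.

Section TransvectionSplit.
Variables (D : unitRingType) (nu : D -> RR) (V : zmodType) (act : V -> D -> V).
Hypotheses (nu_val : valuation nu) (act_mod : right_module act).
Variables (n : nat) (b : 'I_n -> V) (i j : 'I_n).
Hypothesis ij : i != j.

Let ji : (j == i) = false. Proof. by rewrite eq_sym (negbTE ij). Qed.

Lemma split_fun_transv (alpha : 'I_n -> RR) : alpha j <= alpha i ->
  forall r v, split_fun nu act (transv b i j) alpha r v <-> split_fun nu act b alpha r v.
Proof.
move=> ji_le; apply: (split_fun_change (S := fun e => bump e i (- e j)))
  => [d|e|r d]; [exact: lcomb_transv_coord|exact: transv_coordK|].
rewrite /transv_coord /bump; split=> rd k.
  case: eqVneq => [->|//]; apply: vgeD => //; apply: vge_le (rd j); lra.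
have rdj : vge nu (r - alpha j) (d j) by have := rd j; rewrite ji.
case: eqVneq (rd k) => [-> rdi|_ //]; rewrite -(addrK (d j) (d i)).
by apply: vgeB => //; apply: vge_le rdj; lra.
Qed.

Lemma split_fun_transv_swap (alpha : 'I_n -> RR) : alpha j <= alpha i ->
  forall r v, split_fun nu act (transv b j i) alpha r v <->
              split_fun nu act (transv b i j) (fun k => alpha (tperm i j k)) r v.
Proof.
move=> ji_le; apply: (split_fun_change
  (S := fun e k => if k == i then e j + e i else if k == j then - e i else e k))
  => [d|e|r d]; [exact: lcomb_swap_coord|exact: swap_coordK|].
rewrite /swap_coord; split=> rd k.
  case: (eqVneq k i) => [->|ki]; first by rewrite tpermL; apply/(vgeN nu_val).
  case: (eqVneq k j) => [->|kj]; last by rewrite tpermD 1?eq_sym.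
  by rewrite tpermR; apply: vgeD => //; apply: vge_le (rd j); lra.
have rdj : vge nu (r - alpha j) (d j).
  by have := rd i; rewrite eqxx tpermL => /(vgeN nu_val).
case: (eqVneq k i) => [->|ki]; last case: (eqVneq k j) => [->//|kj].
  rewrite -(addrK (d j) (d i)); apply: vgeB => //.
    by have := rd j; rewrite ji eqxx tpermR.
  by apply: vge_le rdj; lra.
by have := rd k; rewrite (negbTE ki) (negbTE kj) tpermD 1?eq_sym.
Qed.

End TransvectionSplit.

Section Apartment.
Variables (D : unitRingType) (nu : D -> RR) (p : D) (V : zmodType) (act : V -> D -> V).
Hypotheses (nu_val : valuation nu) (act_mod : right_module act)
  (D_div : forall x : D, x != 0 -> x \is a GRing.unit) (p_unif : uniformizer nu p).
Variables (a : (RR -> V -> Prop) -> RR) (c : D).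
Hypotheses (a_aff : affine_functional nu p act a) (c0 : c != 0) (val_c : nu c != 0)
  (a_inv : forall Lam, lattice_fun nu p act Lam -> a (scal_fun act c Lam) = a Lam).

Definition apt_fun n (b : 'I_n -> V) (alpha : 'I_n -> RR) := a (split_fun nu act b alpha).

Variables (n : nat) (b : 'I_n -> V).
Hypothesis b_basis : is_basis act b.

Let split_lf := split_lattice_fun nu_val act_mod D_div b_basis p_unif.

Lemma apt_fun_affine : affine_vec (apt_fun b).
Proof. by move=> x y t t01; apply: a_aff. Qed.

Lemma apt_fun_shift (x : 'I_n -> RR) s : apt_fun b (fun i => x i + s) = apt_fun b x.
Proof.
pose f s := apt_fun b (fun i => x i + s).
have f_aff : affine1 f.
  move=> s1 s2 t t01; rewrite /f -apt_fun_affine //; congr apt_fun.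
  by apply: functional_extensionality => i; ring.
have x0 : (fun i => x i + 0) = x by apply: functional_extensionality => i; rewrite addr0.
have f_period : f (- nu c) = f 0.
  rewrite /f x0 -[RHS]a_inv ?split_lf //; congr a.
  by apply: fun2_prop_ext => r v; apply: iff_sym; exact: scal_split_fun.
have := affine1_periodic_const f_aff _ f_period s.
by rewrite oppr_eq0 /f x0 => ->.
Qed.

Lemma apt_fun_transv i j : i != j -> apt_fun (transv b i j) =1 apt_fun b.
Proof.
move=> ij; have tb_basis := is_basis_transv act_mod ij b_basis.
apply: (affine_vec_eq_halfspace (i := i) (j := j)).
- by move=> x y t t01; apply: a_aff => //; exact: split_lattice_fun.
- exact: apt_fun_affine.
move=> x ji_le; congr a; apply: fun2_prop_ext.
exact: split_fun_transv.
Qed.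

Lemma apt_fun_tperm i j (x : 'I_n -> RR) :
  apt_fun b (fun k => x (tperm i j k)) = apt_fun b x.
Proof.
have [<-|ij] := eqVneq i j.
  suff -> : (fun k => x (tperm i i k)) = x by [].
  by apply: functional_extensionality => k; rewrite tperm1 perm1.
have ji : j != i by rewrite eq_sym.
have tperm_ordered y : y j <= y i -> apt_fun b (fun k => y (tperm i j k)) = apt_fun b y.
  move=> y_le; rewrite -(apt_fun_transv ij) -(apt_fun_transv ji); congr a.
  by apply: fun2_prop_ext => r v; apply: iff_sym; exact: split_fun_transv_swap.
case: (lerP (x j) (x i)) => [|x_lt]; first exact: tperm_ordered.
have := tperm_ordered (fun k => x (tperm i j k)); rewrite tpermL tpermR => /(_ (ltW x_lt)).
suff -> : (fun k => x (tperm i j (tperm i j k))) = x by [].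
by apply: functional_extensionality => k; rewrite tpermK.
Qed.

Lemma apt_fun_const (x y : 'I_n -> RR) : apt_fun b x = apt_fun b y.
Proof.
have := affine_vec_const apt_fun_affine apt_fun_shift apt_fun_tperm.
by move=> g_const; rewrite g_const [RHS]g_const.
Qed.

End Apartment.

Lemma finite_common_bound (m : nat) (P : RR -> Prop) (Q : 'I_m -> RR -> Prop) :
  (exists s, P s) -> (forall s s', P s -> P s' -> P (Num.min s s')) ->
  (forall l s s', s' <= s -> Q l s -> Q l s') ->
  (forall l, exists2 s, P s & Q l s) -> exists2 s, P s & forall l, Q l s.
Proof.
move=> [s0 Ps0] P_min Q_le; elim: m Q Q_le => [|m ih] Q Q_le Q_ex.
  by exists s0 => // -[].
have [s1 Ps1 Qs1] := ih (fun l => Q (lift ord0 l)) (fun l => Q_le _) (fun l => Q_ex _).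
have [s Ps Qs] := Q_ex ord0.
exists (Num.min s s1); first exact: P_min.
move=> l; case: (unliftP ord0 l) => [l' ->|->]; [apply: Q_le (Qs1 l')|apply: Q_le Qs].
  by rewrite ge_min lexx orbT.
by rewrite ge_min lexx.
Qed.

Section LatticeFunction.
Variables (D : unitRingType) (nu : D -> RR) (p : D) (V : zmodType) (act : V -> D -> V).
Hypotheses (nu_val : valuation nu) (act_mod : right_module act)
  (D_div : forall x : D, x != 0 -> x \is a GRing.unit) (p_unif : uniformizer nu p).
Variable Lam : RR -> V -> Prop.
Hypothesis Lam_lf : lattice_fun nu p act Lam.

Lemma lf_full r : full_lattice nu act (Lam r). Proof. by case: Lam_lf. Qed.

Lemma lf0 r : Lam r 0.
Proof.
have [m [g [LamE _]]] := lf_full r; apply/LamE; exists (fun _ => 0).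
by split; [left|rewrite lcomb0].
Qed.

Lemma lfD r x y : Lam r x -> Lam r y -> Lam r (x + y).
Proof.
have [m [g [LamE _]]] := lf_full r.
move=> /LamE [d [d0 ->]] /LamE [e [e0 ->]]; apply/LamE.
by exists (fun i => d i + e i); split; [move=> i; apply: vgeD|rewrite lcombD].
Qed.

Lemma lfN r x : Lam r x -> Lam r (- x).
Proof.
have [m [g [LamE _]]] := lf_full r.
move=> /LamE [d [d0 ->]]; apply/LamE.
by exists (fun i => - d i); split; [move=> i; apply/vgeN|rewrite lcombN].
Qed.

Lemma lfB r x y : Lam r x -> Lam r y -> Lam r (x - y).
Proof. by move=> Lx Ly; apply: lfD => //; apply: lfN. Qed.

Lemma lf_sum r (m : nat) (F : 'I_m -> V) (P : pred 'I_m) :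
  (forall l, P l -> Lam r (F l)) -> Lam r (\sum_(l | P l) F l).
Proof. by move=> LF; apply: big_ind; [exact: lf0|exact: lfD|]. Qed.

Lemma lf_act_int r x d : Lam r x -> vge nu 0 d -> Lam r (act x d).
Proof.
have [m [g [LamE _]]] := lf_full r.
move=> /LamE [e [e0 ->]] d0; apply/LamE.
exists (fun i => e i * d); split; last by rewrite act_lcomb.
by move=> i; rewrite -[0]addr0; apply: vgeM.
Qed.

Lemma lf_le r s v : r <= s -> Lam s v -> Lam r v.
Proof. by case: Lam_lf => _ _ Lam_le _ rs; apply: Lam_le rs v. Qed.

Lemma lf_lcont r v : (forall s, s < r -> Lam s v) -> Lam r v.
Proof. by case: Lam_lf => _ _ _; apply. Qed.

Lemma lf_act_unif r x : Lam r x -> Lam (r + nu p) (act x p).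
Proof. by case: Lam_lf => _ Lam_per _ _ Lx; apply/Lam_per; exists x. Qed.

Lemma lf_act_unifV r x : Lam r x -> Lam (r - nu p) (act x p^-1).
Proof.
case: Lam_lf => _ Lam_per _ _; rewrite -[r in Lam r x](subrK (nu p)).
by case/Lam_per => w [Lw ->]; rewrite (actK act_mod) // (unif_unit D_div p_unif).
Qed.

Lemma lf_act_unifX n r x : Lam r x -> Lam (r + n%:R * nu p) (act x (p ^+ n)).
Proof.
elim: n r x => [|n ih] r x Lx; first by rewrite expr0 (act1 act_mod) mul0r addr0.
by rewrite exprSr (actM act_mod) -addn1 natrD mulrDl mul1r addrA; exact/lf_act_unif/ih.
Qed.

Lemma lf_act_unifXV n r x : Lam r x -> Lam (r - n%:R * nu p) (act x (p ^- n)).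
Proof.
rewrite -exprVn; elim: n r x => [|n ih] r x Lx.
  by rewrite expr0 (act1 act_mod) mul0r subr0.
by rewrite exprSr (actM act_mod) -addn1 natrD mulrDl mul1r opprD addrA; exact/lf_act_unifV/ih.
Qed.

Lemma lf_act_upow z r x : Lam r x -> Lam (r + z%:~R * nu p) (act x (upow p z)).
Proof.
case: z => n; first exact: lf_act_unifX.
by rewrite /upow NegzE -exprnN intrN mulNr; exact: lf_act_unifXV.
Qed.

Lemma lf_act r x d : d != 0 -> Lam r x -> Lam (r + nu d) (act x d).
Proof.
move=> d0 Lx; have [z zE] := val_discrete nu_val D_div p_unif d0.
(* [d] is [p^z] times a unit of valuation zero *)
pose u := upow p (- z) * d.
have dE : d = upow p z * u by rewrite /u (upowK D_div p_unif).
have val_u : nu u = 0.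
  rewrite /u valM ?(upow_neq0 D_div p_unif) // (val_upow nu_val D_div p_unif) zE.
  by rewrite intrN mulNr addNr.
rewrite zE dE (actM act_mod); apply: lf_act_int; first exact: lf_act_upow.
by right; rewrite val_u.
Qed.

Lemma lf_actV r x d : d != 0 -> Lam (r + nu d) (act x d) -> Lam r x.
Proof.
move=> d0 /(lf_act (invr_neq0 d0)).
by rewrite (actK act_mod) ?D_div // (valV nu_val D_div) // addrK.
Qed.

Lemma lf_exists v : exists r, Lam r v.
Proof.
have [m [g [LamE g_span]]] := lf_full 0; have [d ->] := g_span v.
have Lg l : Lam 0 (g l).
  apply/LamE; exists (fun i => (i == l)%:R); split.
    by move=> i; case: eqVneq => _; [right; rewrite val1|left].
  rewrite /lcomb (bigD1 l) //= eqxx (act1 act_mod) big1 ?addr0 // => i /negbTE ->.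
  exact: act0r.
have Lgd l : exists2 s, True & Lam s (act (g l) (d l)).
  have [->|dl0] := eqVneq (d l) 0; first by exists 0 => //; rewrite (act0r act_mod); apply: lf0.
  by exists (nu (d l)) => //; have := lf_act dl0 (Lg l); rewrite add0r.
have [s _ Ls] := finite_common_bound (m := m) (ex_intro _ 0 I) (fun _ _ _ _ => I)
  (fun l s s' => @lf_le s' s _) Lgd.
by exists s; apply: lf_sum => l _; apply: Ls.
Qed.

End LatticeFunction.

Section LatticeNorm.
Variables (D : unitRingType) (nu : D -> RR) (p : D) (V : zmodType) (act : V -> D -> V).
Hypotheses (nu_val : valuation nu) (act_mod : right_module act)
  (D_div : forall x : D, x != 0 -> x \is a GRing.unit) (p_unif : uniformizer nu p).

Lemma lf_bound (Lam1 Lam2 : RR -> V -> Prop) :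
  lattice_fun nu p act Lam1 -> lattice_fun nu p act Lam2 ->
  exists C, forall r v, Lam1 r v -> Lam2 (r - C) v.
Proof.
move=> Lam1_lf Lam2_lf; have [m [g [Lam1E _]]] := lf_full Lam1_lf 0.
have [s _ Lg] := finite_common_bound (m := m) (ex_intro _ 0 I) (fun _ _ _ _ => I)
  (fun l s s' => @lf_le _ _ _ _ _ _ Lam2_lf s' s _)
  (fun l => let: ex_intro s Ls := lf_exists nu_val act_mod D_div p_unif Lam2_lf (g l)
            in ex_intro2 _ _ s I Ls).
have Lam12_0 v : Lam1 0 v -> Lam2 s v.
  move=> /Lam1E [d [d0 ->]]; apply: (lf_sum nu_val act_mod Lam2_lf) => l _.
  exact: (lf_act_int nu_val act_mod Lam2_lf).
(* rescale [v] by a power of [p] into [Lam1 0] *)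
exists (nu p - s) => r v Lam1v; have [z /andP[zr rz]] := val_floor p_unif r.
have := lf_act_upow act_mod D_div p_unif Lam1_lf (- z) (lf_le Lam1_lf zr Lam1v).
rewrite intrN mulNr addrN => /Lam12_0 /(lf_act_upow act_mod D_div p_unif Lam2_lf z).
rewrite -(actM act_mod) -(upowD D_div p_unif) addNr /upow expr0z (act1 act_mod).
by apply: (lf_le Lam2_lf (s := s + z%:~R * nu p)); lra.
Qed.

Variables (n : nat) (b0 : 'I_n -> V).
Hypothesis b0_basis : is_basis act b0.

Definition std_lf := split_fun nu act b0 (fun _ => 0).

Lemma std_lf_lf : lattice_fun nu p act std_lf.
Proof. exact: split_lattice_fun. Qed.

Lemma std_lfE r d : std_lf r (lcomb act b0 d) <-> forall i, vge nu r (d i).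
Proof.
split=> [[e [re /(lcomb_inj act_mod b0_basis) de]] i|rd].
  by rewrite de; have := re i; rewrite subr0.
by exists d; split => // i; rewrite subr0.
Qed.

Lemma lf_not_all (Lam : RR -> V -> Prop) : lattice_fun nu p act Lam ->
  forall v, v != 0 -> exists r, ~ Lam r v.
Proof.
move=> Lam_lf v v0; apply: NNPP => Lam_all.
have Lv r : Lam r v by apply: NNPP => Lrv; apply: Lam_all; exists r.
have [C LamC] := lf_bound Lam_lf std_lf_lf; have [d vE] := b0_basis.1 v.
move/eqP: v0; apply; rewrite vE -(lcomb0 act_mod b0); apply: eq_lcomb => i.
apply: vge_eq0 => r; have := LamC (r + C) v (Lv _).
by rewrite vE std_lfE addrK.
Qed.

Lemma lnorm_exists (Lam : RR -> V -> Prop) : lattice_fun nu p act Lam ->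
  forall v, v != 0 -> exists w, forall r, Lam r v <-> r <= w.
Proof.
move=> Lam_lf v v0; have [r0 Lr0] := lf_not_all Lam_lf v0.
have Lam_le r s : Lam r v -> s <= r -> Lam s v by move=> Lrv sr; exact (lf_le Lam_lf sr Lrv).
have Lam_bound : Raxioms.bound (Lam^~ v).
  exists r0 => r Lrv; apply/RleP; rewrite leNgt; apply/negP => r0r.
  by apply: Lr0; apply: Lam_le Lrv (ltW r0r).
have [w [w_ub w_lub]] :=
  Raxioms.completeness _ Lam_bound (lf_exists nu_val act_mod D_div p_unif Lam_lf v).
exists w => r; split=> [Lrv|rw]; first by apply/RleP/w_ub.
(* the supremum is attained by left continuity *)
apply: (Lam_le w _ _ rw); apply: (lf_lcont Lam_lf) => s sw; apply: NNPP => Lsv.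
have /w_lub/RleP : Raxioms.is_upper_bound (Lam^~ v) s.
  move=> t Ltv; apply/RleP; rewrite leNgt; apply/negP => st.
  by apply: Lsv; apply: Lam_le Ltv (ltW st).
by lra.
Qed.

(* meaningful for [v != 0] only: [Lam r 0] holds for every [r] *)
Definition lnorm (Lam : RR -> V -> Prop) (v : V) : RR :=
  epsilon (inhabits 0) (fun w => forall r, Lam r v <-> r <= w).

Lemma lnormP (Lam : RR -> V -> Prop) : lattice_fun nu p act Lam ->
  forall v, v != 0 -> forall r, Lam r v <-> r <= lnorm Lam v.
Proof. by move=> Lam_lf v v0; apply: epsilon_spec (lnorm_exists Lam_lf v0). Qed.

Lemma lf_lnorm (Lam : RR -> V -> Prop) : lattice_fun nu p act Lam ->
  forall v, v != 0 -> Lam (lnorm Lam v) v.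
Proof. by move=> Lam_lf v v0; apply/(lnormP Lam_lf v0). Qed.

Lemma lnorm_act (Lam : RR -> V -> Prop) : lattice_fun nu p act Lam ->
  forall v d, v != 0 -> d != 0 -> lnorm Lam (act v d) = lnorm Lam v + nu d.
Proof.
move=> Lam_lf v d v0 d0; have vd0 := act_neq0 act_mod D_div v0 d0.
have le_vd r : r <= lnorm Lam (act v d) <-> r <= lnorm Lam v + nu d.
  rewrite -(lnormP Lam_lf vd0); split=> [Lrvd|rw].
    have : Lam (r - nu d) v.
      by apply: (lf_actV nu_val act_mod D_div p_unif Lam_lf d0); rewrite subrK.
    by rewrite (lnormP Lam_lf v0); lra.
  have : Lam (r - nu d) v by rewrite (lnormP Lam_lf v0); lra.
  by move/(lf_act nu_val act_mod D_div p_unif Lam_lf d0); rewrite subrK.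
by apply/le_anti/andP; split; [apply/le_vd|apply/le_vd].
Qed.

Lemma lnorm_std_discrete v : v != 0 -> exists z : int, lnorm std_lf v = z%:~R * nu p.
Proof.
move=> v0; have [w_le w_min] := vceil_spec nu_val D_div p_unif (lnorm std_lf v).
have [d vE] := b0_basis.1 v.
exists (vceil nu p (lnorm std_lf v)); apply/le_anti; rewrite w_le /=.
rewrite -(lnormP std_lf_lf v0) [X in std_lf _ X]vE std_lfE => i.
have := lf_lnorm std_lf_lf v0; rewrite [X in std_lf _ X]vE std_lfE => /(_ i).
have [-> _|di0 /(vge_neq0 nu _ di0) wd] := eqVneq (d i) 0; first by left.
by right; exact (w_min _ di0 wd).
Qed.

End LatticeNorm.

Section LinearDependence.
Variable D : unitRingType.
Hypothesis D_div : forall x : D, x != 0 -> x \is a GRing.unit.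

(* one step of Gaussian elimination, with pivot [X l0 ord0] *)
Lemma sum_eliminate_pivot n m (X : 'I_m.+1 -> 'I_n.+1 -> D) l0 (c' : 'I_m -> D) i :
  let x0 := X l0 ord0 in
  let c l := if unlift l0 l is Some l' then c' l'
             else - \sum_(l' < m) x0^-1 * X (lift l0 l') ord0 * c' l' in
  \sum_(l < m.+1) X l i * c l =
  \sum_(l' < m) (X (lift l0 l') i - X l0 i * (x0^-1 * X (lift l0 l') ord0)) * c' l'.
Proof.
move=> x0 c; rewrite (bigD1_ord l0 (P := xpredT)) //= /c unlift_none.
under eq_bigr do rewrite liftK.
rewrite mulrN mulr_sumr -sumrN -big_split /=.
by apply: eq_bigr => l' _; rewrite mulrBl addrC !mulrA.
Qed.

Lemma underdetermined_nontrivial_solution n m (X : 'I_m -> 'I_n -> D) : (n < m)%N ->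
  exists2 c : 'I_m -> D, exists l, c l != 0 & forall i, \sum_(l < m) X l i * c l = 0.
Proof.
elim: n m X => [|n ih] m X nm.
  by exists (fun _ => 1) => [|[]//]; exists (Ordinal nm); apply: oner_neq0.
case: m X nm => [//|m] X nm.
case: (boolP [exists l, X l ord0 != 0]) => [/existsP [l0 x0_neq0]|].
  pose x0 := X l0 ord0.
  pose Y (l' : 'I_m) (i' : 'I_n) :=
    X (lift l0 l') (lift ord0 i') - X l0 (lift ord0 i') * (x0^-1 * X (lift l0 l') ord0).
  have [c' [l1 c'l1] Yc'] := ih m Y nm.
  exists (fun l => if unlift l0 l is Some l' then c' l'
                   else - \sum_(l' < m) x0^-1 * X (lift l0 l') ord0 * c' l').
    by exists (lift l0 l1); rewrite liftK.
  move=> i; rewrite (sum_eliminate_pivot X l0 c' i).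
  case: (unliftP ord0 i) => [i' ->|->]; first exact: Yc'.
  by apply: big1 => l' _; rewrite mulrA mulrV ?mul1r ?subrr ?mul0r ?D_div.
rewrite negb_exists => /forallP col0.
have [c c_nz Xc] := ih m.+1 (fun l i' => X l (lift ord0 i')) (ltnW nm).
exists c => // i; case: (unliftP ord0 i) => [i' ->|->]; first exact: Xc.
by apply: big1 => l _; move: (col0 l); rewrite negbK => /eqP ->; rewrite mul0r.
Qed.

Variables (V : zmodType) (act : V -> D -> V).
Hypothesis act_mod : right_module act.

Lemma not_free_overfull n (b : 'I_n -> V) (w : 'I_n.+1 -> V) : is_basis act b ->
  ~ (forall c, lcomb act w c = 0 -> forall l, c l = 0).
Proof.
move=> b_basis w_free.
pose X l := epsilon (inhabits (fun=> 0)) (fun d => w l = lcomb act b d).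
have wE l : w l = lcomb act b (X l).
  exact: (epsilon_spec _ (fun d => w l = lcomb act b d) (b_basis.1 (w l))).
have [c [l1 cl1] Xc] := underdetermined_nontrivial_solution X (ltnSn n).
move/eqP: cl1; apply; apply: w_free; rewrite /lcomb.
under eq_bigr do rewrite wE (act_lcomb act_mod) /lcomb.
rewrite exchange_big /=; apply: big1 => i _.
by rewrite -(act_sumr act_mod) Xc (act0r act_mod).
Qed.

End LinearDependence.

Lemma near_sup_distinct (T : Type) (U : T -> Prop) (f : T -> RR) (M e : RR) : 0 < e ->
  (forall x, U x -> f x < M) -> (forall t, t < M -> exists2 x, U x & t < f x) ->
  forall k, exists ws : 'I_k -> T,
    (forall l, U (ws l) /\ M - e < f (ws l)) /\
    (forall l l', l != l' -> f (ws l) != f (ws l')).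
Proof.
move=> e0 f_lt f_near; elim=> [|k [ws [ws_near ws_inj]]].
  by have [x0 _ _] := f_near (M - 1) ltac:(lra); exists (fun=> x0); split => -[].
pose t := \big[Num.max/(M - e)]_(l < k) f (ws l).
have ws_le l : f (ws l) <= t by rewrite /t (bigD1 l) //= le_max lexx.
have t_ge : M - e <= t.
  by rewrite /t; elim/big_rec: _ => // l x _ ex; rewrite le_max ex orbT.
have tM : t < M.
  rewrite /t; elim/big_ind: _ => [|x y xM yM|l _]; first lra.
    by rewrite gt_max xM yM.
  by case: (ws_near l) => Uw _; apply: f_lt.
(* a new value above all the previous ones *)
have [x Ux tx] := f_near t tM.
exists (fun l => if unlift ord_max l is Some l' then ws l' else x); split.
  by move=> l; case: (unliftP ord_max l) => [l' _|_]; [apply: ws_near|split=> //; lra].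
move=> l l'; case: (unliftP ord_max l) => [i ->|->]; case: (unliftP ord_max l') => [j ->|->].
- by move=> ij; apply: ws_inj; apply: contraNneq ij => ->.
- by move=> _; rewrite lt_eqF // (le_lt_trans (ws_le i)).
- by move=> _; rewrite gt_eqF // (le_lt_trans (ws_le j)).
- by rewrite eqxx.
Qed.

Lemma intr_mul_lt_eq0 (R : numDomainType) (z : int) (e : R) :
  0 < e -> `|z%:~R * e| < e -> z = 0.
Proof.
move=> e0; rewrite normrM (gtr0_norm e0) -[X in _ < X]mul1r ltr_pM2r // -intr_norm ltrz1.
by rewrite -[1%R]add0r ltzD1 normr_le0 => /eqP.
Qed.

Section NormGap.
Variables (D : unitRingType) (nu : D -> RR) (p : D) (V : zmodType) (act : V -> D -> V).
Hypotheses (nu_val : valuation nu) (act_mod : right_module act)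
  (D_div : forall x : D, x != 0 -> x \is a GRing.unit) (p_unif : uniformizer nu p).
Variables (n : nat) (b0 : 'I_n -> V) (Lam : RR -> V -> Prop).
Hypotheses (b0_basis : is_basis act b0) (Lam_lf : lattice_fun nu p act Lam).

Local Notation Lam0 := (std_lf nu act b0).
Let Lam0_lf : lattice_fun nu p act Lam0 := std_lf_lf nu_val act_mod D_div p_unif b0_basis.
Let lnorm_act := lnorm_act nu_val act_mod D_div p_unif b0_basis.
Let lnormP := lnormP nu_val act_mod D_div p_unif b0_basis.
Let lf_lnorm := lf_lnorm nu_val act_mod D_div p_unif b0_basis.

Definition norm_gap v := lnorm Lam v - lnorm Lam0 v.

Lemma norm_gap_act v d : v != 0 -> d != 0 -> norm_gap (act v d) = norm_gap v.
Proof. by move=> v0 d0; rewrite /norm_gap !lnorm_act //; ring. Qed.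

Lemma norm_gap_bound : exists C, forall v, v != 0 -> norm_gap v <= C.
Proof.
have [C LamC] := lf_bound nu_val act_mod D_div p_unif Lam_lf Lam0_lf.
exists C => v v0; have := LamC _ _ (lf_lnorm Lam_lf v0).
by rewrite (lnormP Lam0_lf v0) /norm_gap; lra.
Qed.

(* The norms [lnorm Lam (act (w l) (c l))] of the nonzero terms of the
   combination are pairwise distinct modulo [nu p]; the smallest one cannot
   be cancelled by the others. *)
Lemma free_of_incongruent_gaps m (w : 'I_m -> V) : (forall l, w l != 0) ->
  (forall l l', l != l' -> forall z : int, norm_gap (w l) - norm_gap (w l') != z%:~R * nu p) ->
  forall c, lcomb act w c = 0 -> forall l, c l = 0.
Proof.
move=> w_neq0 gap_incongr c wc0 l1; apply/eqP; apply: contraT => cl1.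
pose t l := act (w l) (c l).
have t_neq0 l : c l != 0 -> t l != 0 by move=> cl; apply: act_neq0.
case: (@arg_minP _ _ _ l1 (fun l => c l != 0) (fun l => lnorm Lam (t l)) cl1) => l0 cl0 t_min.
pose A := lnorm Lam (t l0).
have lnorm_t l : c l != 0 -> lnorm Lam (t l) = norm_gap (w l) + lnorm Lam0 (w l) + nu (c l).
  by move=> cl; rewrite /t lnorm_act // /norm_gap; ring.
have A_lt l : c l != 0 -> l != l0 -> A < lnorm Lam (t l).
  move=> cl ll0; rewrite lt_def t_min // andbT; apply/eqP => tl_eq.
  have [z [z0 [y [y0 [zE z0E yE y0E]]]]] : exists z z0 y y0 : int,
      [/\ lnorm Lam0 (w l) = z%:~R * nu p, lnorm Lam0 (w l0) = z0%:~R * nu p,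
          nu (c l) = y%:~R * nu p & nu (c l0) = y0%:~R * nu p].
    have [z zE] := lnorm_std_discrete nu_val act_mod D_div p_unif b0_basis (w_neq0 l).
    have [z0 z0E] := lnorm_std_discrete nu_val act_mod D_div p_unif b0_basis (w_neq0 l0).
    have [y yE] := val_discrete nu_val D_div p_unif cl.
    have [y0 y0E] := val_discrete nu_val D_div p_unif cl0.
    by exists z, z0, y, y0.
  move/negP: (gap_incongr l l0 ll0 (z0 + y0 - z - y)); apply; apply/eqP.
  move: tl_eq; rewrite /A !lnorm_t // zE z0E yE y0E !intrD !intrN; lra.
have [s As Ls] : exists2 s, A < s & forall l, l != l0 -> Lam s (t l).
  apply: (finite_common_bound (P := fun s => A < s) (Q := fun l s => l != l0 -> Lam s (t l))).
  - by exists (A + 1); lra.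
  - by move=> s s' As As'; rewrite lt_min As As'.
  - by move=> l s s' s's Ls ll0; exact (lf_le Lam_lf s's (Ls ll0)).
  move=> l; have [cl0'|cl] := eqVneq (c l) 0.
    exists (A + 1); first lra.
    by move=> _; rewrite /t cl0' (act0r act_mod); apply: (lf0 act_mod Lam_lf).
  have [->|ll0] := eqVneq l l0; first by exists (A + 1) => //; lra.
  by exists (lnorm Lam (t l)); [exact: A_lt cl ll0|move=> _; exact (lf_lnorm Lam_lf (t_neq0 l cl))].
have tl0E : t l0 = - \sum_(l | l != l0) t l.
  by apply/eqP; rewrite -addr_eq0; move: wc0; rewrite /lcomb (bigD1 l0) // => /eqP.
have /(lfN nu_val act_mod Lam_lf) := lf_sum nu_val act_mod Lam_lf (fun l ll0 => Ls l ll0).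
by rewrite -tl0E (lnormP Lam_lf (t_neq0 _ cl0)) -/A; lra.
Qed.

(* If the supremum of [norm_gap] on [U] were not attained, [n.+1] vectors
   with distinct values of [norm_gap] within [nu p] of the supremum would be
   linearly independent. *)
Lemma norm_gap_max (U : V -> Prop) : (exists v, U v /\ v != 0) ->
  exists v, [/\ U v, v != 0 & forall w, U w -> w != 0 -> norm_gap w <= norm_gap v].
Proof.
move=> [u [Uu u0]]; apply: NNPP => no_max.
pose E x := exists v, [/\ U v, v != 0 & x = norm_gap v].
have [C gapC] := norm_gap_bound.
have E_bound : Raxioms.bound E.
  by exists C => x [v [Uv v0 ->]]; apply/RleP; apply: gapC.
have [M [M_ub M_lub]] :=
  Raxioms.completeness _ E_bound (ex_intro _ _ (ex_intro _ u (And3 Uu u0 erefl))).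
have gap_lt v : U v /\ v != 0 -> norm_gap v < M.
  case=> Uv v0; rewrite lt_def; apply/andP; split; last by apply/RleP/M_ub; exists v.
  apply/eqP => gapM; apply: no_max; exists v; split=> // w Uw w0; rewrite -gapM.
  by apply/RleP/M_ub; exists w.
have gap_near t : t < M -> exists2 v, U v /\ v != 0 & t < norm_gap v.
  move=> tM; apply: NNPP => no_v; have /M_lub/RleP : Raxioms.is_upper_bound E t.
    move=> x [v [Uv v0 ->]]; apply/RleP; rewrite leNgt; apply/negP => tv.
    by apply: no_v; exists v.
  by lra.
have e0 := val_unif_gt0 p_unif.
have [ws [ws_near ws_inj]] := near_sup_distinct e0 gap_lt gap_near n.+1.
apply: (not_free_overfull D_div act_mod (w := ws) b0_basis).
apply: free_of_incongruent_gaps => [l|l l' ll' z]; first by case: (ws_near l) => -[].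
apply/eqP => gapE; move/negP: (ws_inj l l' ll'); apply; rewrite -subr_eq0 gapE.
suff -> : z = 0 by rewrite mul0r.
  apply: (intr_mul_lt_eq0 e0); rewrite -gapE ltr_norml.
  case: (ws_near l) (ws_near l') => [Ul ?] [Ul' ?].
  by have := gap_lt _ Ul; have := gap_lt _ Ul'; lra.
Qed.

End NormGap.

Section CommonApartment.
Variables (D : unitRingType) (nu : D -> RR) (p : D) (V : zmodType) (act : V -> D -> V).
Hypotheses (nu_val : valuation nu) (act_mod : right_module act)
  (D_div : forall x : D, x != 0 -> x \is a GRing.unit) (p_unif : uniformizer nu p).
Variables (n : nat) (b0 : 'I_n -> V).
Hypothesis b0_basis : is_basis act b0.

Local Notation Lam0 := (std_lf nu act b0).
Let Lam0_lf : lattice_fun nu p act Lam0 := std_lf_lf nu_val act_mod D_div p_unif b0_basis.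
Let lnormP := lnormP nu_val act_mod D_div p_unif b0_basis.

Lemma lf_act_lnorm (L : RR -> V -> Prop) : lattice_fun nu p act L ->
  forall x d r, x != 0 -> L r (act x d) <-> vge nu (r - lnorm L x) d.
Proof.
move=> L_lf x d r x0; have [->|d0] := eqVneq d 0.
  by rewrite (act0r act_mod); split=> _; [left|apply: (lf0 act_mod L_lf)].
rewrite (lnormP L_lf (act_neq0 act_mod D_div x0 d0)).
by rewrite (lnorm_act nu_val act_mod D_div p_unif b0_basis L_lf x0 d0) vge_neq0 //; lra.
Qed.

Definition supp (S : {set 'I_n}) (d : 'I_n -> D) := forall k, k \notin S -> d k = 0.
Definition span_on (S : {set 'I_n}) (v : V) := exists2 d, supp S d & v = lcomb act b0 d.

(* [x] splits off the subspace [W] with respect to [L] *)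
Definition lf_orth (L : RR -> V -> Prop) (x : V) (W : V -> Prop) :=
  forall d w r, W w -> L r (act x d + w) <-> L r (act x d) /\ L r w.

Lemma std_lf_orth (S : {set 'I_n}) (cs : 'I_n -> D) j :
  cs j != 0 -> (forall k, cs k != 0 -> nu (cs j) <= nu (cs k)) ->
  lf_orth Lam0 (lcomb act b0 cs) (span_on (S :\ j)).
Proof.
move=> csj0 csj_min d w r [e e_supp ->]; split=> [Lr|[Lx Lw]]; last first.
  exact (lfD nu_val act_mod Lam0_lf Lx Lw).
have ej : e j = 0 by apply: e_supp; rewrite !inE eqxx.
suff Lx : Lam0 r (act (lcomb act b0 cs) d).
  by split=> //; have := lfB nu_val act_mod Lam0_lf Lr Lx; rewrite addrC addKr.
move: Lr; rewrite !(act_lcomb act_mod) -(lcombD act_mod) !std_lfE // => /(_ j).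
rewrite ej addr0 => Lj k.
have [->|csk0] := eqVneq (cs k) 0; first by rewrite mul0r; left.
have [->|d0] := eqVneq d 0; first by rewrite mulr0; left.
move: Lj; rewrite !vge_neq0 ?divr_mul_neq0 // !valM //.
by have := csj_min k csk0; lra.
Qed.

(* otherwise [act x d + w] would have a larger [norm_gap] than [x] *)
Lemma lf_orth_gap_max (Lam : RR -> V -> Prop) (x : V) (W : V -> Prop) :
  lattice_fun nu p act Lam -> x != 0 ->
  (forall d w, W w -> d != 0 -> act x d + w != 0) ->
  (forall d w, W w -> act x d + w != 0 ->
     norm_gap nu act b0 Lam (act x d + w) <= norm_gap nu act b0 Lam x) ->
  lf_orth Lam0 x W -> lf_orth Lam x W.
Proof.
move=> Lam_lf x0 xW0 gap_max orth0 d w r Ww; split=> [Lr|[Lx Lw]]; last first.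
  exact (lfD nu_val act_mod Lam_lf Lx Lw).
suff Lx : Lam r (act x d).
  by split=> //; have := lfB nu_val act_mod Lam_lf Lr Lx; rewrite addrC addKr.
apply: NNPP => Lx.
have d0 : d != 0.
  by apply/eqP => d_eq0; apply: Lx; rewrite d_eq0 (act0r act_mod); exact (lf0 act_mod Lam_lf r).
set y := act x d + w; have y0 : y != 0 by apply: xW0.
have xd0 := act_neq0 act_mod D_div x0 d0.
have ry : r <= lnorm Lam y by rewrite -(lnormP Lam_lf y0).
have xd_lt : lnorm Lam (act x d) < r.
  by rewrite ltNge; apply/negP => r_le; apply: Lx; apply/(lnormP Lam_lf xd0).
have y_le : lnorm Lam0 y <= lnorm Lam0 (act x d).
  have [Lxd _] := (orth0 d w _ Ww).1 (lf_lnorm nu_val act_mod D_div p_unif b0_basis Lam0_lf y0).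
  by rewrite -(lnormP Lam0_lf xd0).
have := gap_max d w Ww y0.
rewrite -(norm_gap_act nu_val act_mod D_div p_unif b0_basis Lam_lf x0 d0) /norm_gap.
by lra.
Qed.

Definition fupd (T : Type) (f : 'I_n -> T) j (x : T) : 'I_n -> T :=
  fun k => if k == j then x else f k.

Lemma lcomb_fupd (u : 'I_n -> V) j x d :
  lcomb act (fupd u j x) d = act x (d j) + lcomb act u (fupd d j 0).
Proof.
rewrite /lcomb (bigD1 j) //= [X in _ = _ + X](bigD1 j) //= /fupd !eqxx (act0r act_mod) add0r.
by congr (_ + _); apply: eq_bigr => k /negbTE ->.
Qed.

Lemma supp_fupd (S : {set 'I_n}) j d : supp S d -> supp (S :\ j) (fupd d j 0).
Proof. by move=> dS k; rewrite !inE negb_and negbK /fupd; case: eqVneq => //= _ /dS. Qed.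

Definition splits_on (S : {set 'I_n}) (u : 'I_n -> V) (L : RR -> V -> Prop) (al : 'I_n -> RR) :=
  forall d r, supp S d -> L r (lcomb act u d) <-> forall k, k \in S -> vge nu (r - al k) (d k).

Lemma splits_on_fupd (S : {set 'I_n}) j (u : 'I_n -> V) x (L : RR -> V -> Prop) al :
  lattice_fun nu p act L -> j \in S -> x != 0 ->
  (forall d, supp (S :\ j) d -> span_on (S :\ j) (lcomb act u d)) ->
  lf_orth L x (span_on (S :\ j)) -> splits_on (S :\ j) u L al ->
  splits_on S (fupd u j x) L (fupd al j (lnorm L x)).
Proof.
move=> L_lf jS x0 u_span x_orth u_split d r dS; rewrite lcomb_fupd.
have xE := lf_act_lnorm L_lf (d j) r x0.
have uE := u_split _ r (supp_fupd (j := j) dS).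
rewrite x_orth; last exact/u_span/supp_fupd.
split=> [[Lj LS] k kS|Ld].
  rewrite /fupd; case: eqVneq => [->|kj]; first exact: xE.1 Lj.
  by have := uE.1 LS k; rewrite !inE kj kS /fupd (negbTE kj); apply.
split; first by apply: xE.2; have := Ld j jS; rewrite /fupd eqxx.
apply: uE.2 => k; rewrite !inE => /andP[/negbTE kj kS].
by have := Ld k kS; rewrite /fupd kj.
Qed.

Lemma span_on_fupd (S : {set 'I_n}) j (u : 'I_n -> V) cs :
  j \in S -> supp S cs -> cs j != 0 ->
  (forall d, supp (S :\ j) d -> span_on (S :\ j) (lcomb act u d)) ->
  (forall c, supp (S :\ j) c -> exists2 d, supp (S :\ j) d & lcomb act b0 c = lcomb act u d) ->
  (forall d, supp S d -> span_on S (lcomb act (fupd u j (lcomb act b0 cs)) d)) /\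
  (forall c, supp S c ->
     exists2 d, supp S d & lcomb act b0 c = lcomb act (fupd u j (lcomb act b0 cs)) d).
Proof.
move=> jS csS csj0 u_span b0_span; have SjS k : k \in S :\ j -> k \in S by case/setD1P.
have suppS' e : supp (S :\ j) e -> supp S e.
  by move=> eS' k kS; apply: eS'; apply: contraNN kS; apply: SjS.
split=> [d dS|c cS].
  rewrite lcomb_fupd; have [e eS' ->] := u_span _ (supp_fupd (j := j) dS).
  exists (fun k => cs k * d j + e k); last by rewrite (act_lcomb act_mod) (lcombD act_mod).
  by move=> k kS; rewrite csS // (suppS' _ eS') // mul0r addr0.
(* subtract the multiple of the new vector matching the [j]-th coordinate *)
pose q := (cs j)^-1 * c j; pose e k := c k - cs k * q.
have eS' : supp (S :\ j) e.
  move=> k; rewrite !inE negb_and negbK /e; case: eqVneq => [->|_] /= kS.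
    by rewrite /q mulrA mulrV ?mul1r ?subrr ?D_div.
  by rewrite cS // csS // mul0r subrr.
have [d dS' eE] := b0_span e eS'.
exists (fupd d j q).
  move=> k kS; rewrite /fupd; case: eqVneq kS => [->|kj] kS; first by rewrite jS in kS.
  by apply: dS'; rewrite !inE kj.
rewrite lcomb_fupd (eq_lcomb act u (e := d)); last first.
  by move=> k; rewrite /fupd; case: eqVneq => [->|//]; rewrite (dS' j) // !inE eqxx.
rewrite -eE /fupd eqxx (act_lcomb act_mod) -(lcombD act_mod); apply: eq_lcomb => k.
by rewrite /e addrC subrK.
Qed.

Variable Lam : RR -> V -> Prop.
Hypothesis Lam_lf : lattice_fun nu p act Lam.

Definition partial_apartment (S : {set 'I_n}) := exists (u : 'I_n -> V) (al be : 'I_n -> RR),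
  [/\ forall d, supp S d -> span_on S (lcomb act u d),
      forall c, supp S c -> exists2 d, supp S d & lcomb act b0 c = lcomb act u d,
      splits_on S u Lam al & splits_on S u Lam0 be].

Lemma partial_apartment0 : partial_apartment set0.
Proof.
have supp0 d : supp set0 d -> forall F, lcomb act F d = 0.
  move=> d0 F; transitivity (lcomb act F (fun=> 0)); last exact: lcomb0.
  by apply: eq_lcomb => k; apply: d0; rewrite inE.
exists b0, (fun=> 0), (fun=> 0); split=> [d d0|c c0|d r d0|d r d0].
- by exists (fun=> 0) => //; rewrite !supp0.
- by exists (fun=> 0) => //; rewrite !supp0.
- by rewrite supp0 //; split=> [_ k|_]; [rewrite inE|exact (lf0 act_mod Lam_lf r)].
- by rewrite supp0 //; split=> [_ k|_]; [rewrite inE|exact (lf0 act_mod Lam0_lf r)].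
Qed.

Lemma exists_gap_max_pivot (S : {set 'I_n}) : S != set0 ->
  exists cs j, [/\ supp S cs, j \in S, cs j != 0,
    forall k, cs k != 0 -> nu (cs j) <= nu (cs k) &
    forall w, span_on S w -> w != 0 ->
      norm_gap nu act b0 Lam w <= norm_gap nu act b0 Lam (lcomb act b0 cs)].
Proof.
move=> /set0Pn[j0 j0S].
have w0 : exists w, span_on S w /\ w != 0.
  exists (lcomb act b0 (fun k => (k == j0)%:R)); split.
    by exists (fun k => (k == j0)%:R) => // k; case: eqVneq => // ->; rewrite j0S.
  apply/eqP => /(b0_basis.2) /(_ j0); rewrite eqxx => /eqP; apply/negP/oner_neq0.
have [_ [[cs csS ->] x0 x_max]] := norm_gap_max nu_val act_mod D_div p_unif b0_basis Lam_lf w0.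
have [k1 csk1] : exists k1, cs k1 != 0.
  apply: NNPP => cs0; move/eqP: x0; apply; rewrite -(lcomb0 act_mod b0).
  by apply: eq_lcomb => k; apply/eqP; apply: contraT => csk; case: cs0; exists k.
case: (@arg_minP _ _ _ k1 (fun k => cs k != 0) (fun k => nu (cs k)) csk1) => j csj0 csj_min.
by exists cs, j; split=> //; apply: contraT => /csS csj; rewrite csj eqxx in csj0.
Qed.

Lemma partial_apartment_step (S : {set 'I_n}) : S != set0 ->
  (forall j, j \in S -> partial_apartment (S :\ j)) -> partial_apartment S.
Proof.
move=> S0 IH; have [cs [j [csS jS csj0 csj_min x_max]]] := exists_gap_max_pivot S0.
have x0 : lcomb act b0 cs != 0.
  by apply/eqP => /(b0_basis.2) /(_ j) /eqP; apply/negP.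
have [u [al [be [u_span b0_span u_split u_split0]]]] := IH j jS.
have [span_x span_b0] := span_on_fupd jS csS csj0 u_span b0_span.
have xdwE d w : span_on (S :\ j) w -> exists2 e, supp (S :\ j) e &
    act (lcomb act b0 cs) d + w = lcomb act b0 (fun k => cs k * d + e k).
  by case=> e eS' ->; exists e => //; rewrite (act_lcomb act_mod) (lcombD act_mod).
have xW0 d w : span_on (S :\ j) w -> d != 0 -> act (lcomb act b0 cs) d + w != 0.
  move=> /(xdwE d) [e eS' ->] d0; apply/eqP => /(b0_basis.2) /(_ j).
  rewrite (eS' j) ?inE ?eqxx // addr0 => /eqP; apply/negP; exact: divr_mul_neq0.
have gap_max d w : span_on (S :\ j) w -> act (lcomb act b0 cs) d + w != 0 ->
    norm_gap nu act b0 Lam (act (lcomb act b0 cs) d + w) <=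
    norm_gap nu act b0 Lam (lcomb act b0 cs).
  move=> /(xdwE d) [e eS' xdwE'] xdw0; apply: x_max xdw0.
  exists (fun k => cs k * d + e k) => // k kS.
  by rewrite csS // mul0r add0r; apply: eS'; rewrite !inE negb_and kS orbT.
have orth0 := std_lf_orth (S := S) csj0 (fun k csk => csj_min k csk).
have orth := lf_orth_gap_max Lam_lf x0 xW0 gap_max orth0.
exists (fupd u j (lcomb act b0 cs)), (fupd al j (lnorm Lam (lcomb act b0 cs))).
exists (fupd be j (lnorm Lam0 (lcomb act b0 cs))); split=> //.
  exact: splits_on_fupd Lam_lf jS x0 u_span orth u_split.
exact: splits_on_fupd Lam0_lf jS x0 u_span orth0 u_split0.
Qed.

Lemma partial_apartmentT : partial_apartment setT.
Proof.
suff IH k (S : {set 'I_n}) : (#|S| <= k)%N -> partial_apartment S by exact: IH (leqnn _).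
elim: k S => [|k ih] S; first by rewrite leqn0 cards_eq0 => /eqP ->; apply: partial_apartment0.
have [->|S0 Sk] := eqVneq S set0; first by move=> _; apply: partial_apartment0.
apply: partial_apartment_step S0 _ => j jS; apply: ih.
by move: Sk; rewrite (cardsD1 j S) jS add1n ltnS.
Qed.

Lemma common_splitting_basis : exists (u : 'I_n -> V) (al be : 'I_n -> RR),
  [/\ is_basis act u, splits nu act Lam u al & splits nu act Lam0 u be].
Proof.
have [u [al [be [_ b0_span u_split u_split0]]]] := partial_apartmentT.
have suppT d : supp setT d by move=> k; rewrite inE.
have u_basis : is_basis act u.
  split=> [v|d d0 k].
    by have [c ->] := b0_basis.1 v; have [d _ ->] := b0_span c (suppT c); exists d.
  apply: (@vge_eq0 _ nu) => r.
  have Lu : Lam (r + al k) (lcomb act u d).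
    by rewrite d0; exact (lf0 act_mod Lam_lf _).
  by have := (u_split d _ (suppT d)).1 Lu k (in_setT k); rewrite addrK.
have splits_onT L ga : splits_on setT u L ga -> splits nu act L u ga.
  move=> L_split r v; have [d ->] := u_basis.1 v; rewrite L_split //.
  split=> [Ld|[e [re /(lcomb_inj act_mod u_basis) de]] k _]; last by rewrite de.
  by exists d; split=> // k; apply: Ld; rewrite inE.
by exists u, al, be; split=> //; apply: splits_onT.
Qed.

End CommonApartment.

Lemma affine_invariant_const (D : unitRingType) (nu : D -> RR) (p : D)
    (V : zmodType) (act : V -> D -> V) (a : (RR -> V -> Prop) -> RR) (c : D) :
  valuation nu -> (forall x : D, x != 0 -> x \is a GRing.unit) -> uniformizer nu p ->
  right_module act -> finite_dim act -> affine_functional nu p act a ->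
  c != 0 -> nu c != 0 ->
  (forall Lam, lattice_fun nu p act Lam -> a (scal_fun act c Lam) = a Lam) ->
  exists C, forall Lam, lattice_fun nu p act Lam -> a Lam = C.
Proof.
move=> nu_val D_div p_unif act_mod [n [b0 b0_basis]] a_aff c0 val_c a_inv.
exists (a (std_lf nu act b0)) => Lam Lam_lf.
have [u [al [be [u_basis Lam_split Lam0_split]]]] :=
  common_splitting_basis nu_val act_mod D_div p_unif b0_basis Lam_lf.
rewrite (fun2_prop_ext Lam_split) (fun2_prop_ext Lam0_split).
exact (apt_fun_const nu_val act_mod D_div p_unif a_aff c0 val_c a_inv u_basis al be).
Qed.

Theorem mainTheorem10
  (k : fieldType) (nu : k -> RR)
  (hk : nonarch_local_field nu) (h2 : residue_char_not2 nu) :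
  (* (1) general case: central division algebra D, right D-space V *)
  (forall (D : falgType k)
          (hdiv : forall x : D, x != 0 -> x \is a GRing.unit)
          (hcent : forall x : D, (forall y : D, x * y = y * x) ->
                     exists c : k, x = c%:A)
          (nuD : D -> RR)
          (hnuD : valuation nuD)
          (hext : forall c : k, c != 0 -> nuD (c%:A) = nu c)
          (piD : D) (hpi : uniformizer nuD piD)
          (V : zmodType) (act : V -> D -> V)
          (hV : right_module act) (hfd : finite_dim act)
          (a : (RR -> V -> Prop) -> RR),
      affine_functional nuD piD act a ->
      (forall (c : k) (Lam : RR -> V -> Prop), c != 0 ->
          lattice_fun nuD piD act Lam ->
          a (scal_fun act (c%:A) Lam) = a Lam) ->
      exists C : RR, forall Lam, lattice_fun nuD piD act Lam -> a Lam = C)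
  /\
  (* (2) building of O^{is}_2 identified with Latt^1_{o_k}(k) *)
  (forall (pik : k) (hpik : uniformizer nu pik)
          (a : (RR -> k -> Prop) -> RR),
      affine_functional nu pik ( *%R) a ->
      (forall (c : k) (Lam : RR -> k -> Prop), c != 0 ->
          lattice_fun nu pik ( *%R) Lam ->
          a (scal_fun ( *%R) c Lam) = a Lam) ->
      exists C : RR, forall Lam, lattice_fun nu pik ( *%R) Lam -> a Lam = C).
Proof.
case: hk => -[nu_val [e [e0 [_ [x0 [x00 nu_x0]]]]]] _ _.
have val_x0 : nu x0 != 0 by rewrite nu_x0 gt_eqF.
split=> [D D_div _ nuD nuD_val nuD_ext piD piD_unif V act act_mod act_fd a a_aff a_inv
        |pik pik_unif a a_aff a_inv].
  apply: (affine_invariant_const (c := x0%:A) nuD_val D_div piD_unif act_mod act_fd a_aff).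
  - by rewrite scaler_eq0 negb_or x00 oner_neq0.
  - by rewrite nuD_ext.
  - by move=> Lam; apply: a_inv.
have k_div (x : k) : x != 0 -> x \is a GRing.unit by rewrite unitfE.
have k_mod : right_module ( *%R : k -> k -> k).
  by split=> *; [exact: mulrDl|exact: mulrDr|exact: mulrA|exact: mulr1].
have k_dim : finite_dim ( *%R : k -> k -> k).
  exists 1%N, (fun=> 1); split=> [v|d]; first by exists (fun=> v); rewrite /lcomb big_ord1 mul1r.
  by rewrite /lcomb big_ord1 mul1r => d0 i; rewrite (ord1 i).
exact: affine_invariant_const nu_val k_div pik_unif k_mod k_dim a_aff x00 val_x0
  (fun Lam => a_inv x0 Lam x00).
Qed.
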